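(* Let $a,b$ be nonnegative integers and let $G$ be a finite $(a,b)$-valent group. Then either $G$ has trivial soluble radical (i.e. $G$ has no nontrivial soluble normal subgroup), or $G$ has a minimal normal subgroup $N$ which is elementary abelian (isomorphic to $\mathbb{Z}_p^d$ for some prime $p$ and $d\ge1$) such that $G/N$ is a sub-$(a,b)$-valent group.
   Context: An involution is an element of order $2$. A subset $S$ of a group $G$ is a Cayley set of $G$ if $1\notin S$, $S$ is inverse-closed, and $S$ generates $G$. On pairs of nonnegative integers define $(a',b')\preccurlyeq(a,b)$ if and only if $b'\le b$ and $a'\le a+(b-b')/2$. A Cayley set is $(a,b)$-valent if it consists of exactly $a$ involutions and $b$ non-involutions, and sub-$(a,b)$-valent if it consists of $a'$ involutions and $b'$ non-involutions with $(a',b')\preccurlyeq(a,b)$. A group is $(a,b)$-valent (resp. sub-$(a,b)$-valent) if it has an $(a,b)$-valent (resp. sub-$(a,b)$-valent) Cayley set. The soluble radical of $G$ is its largest soluble normal subgroup. (The paper phrases the second alternative as ''$G$ is a direct elementary abelian extension of a sub-$(a,b)$-valent group'', where an extension of $Q$ by $N$ with $G/N\cong Q$ is direct if $N$ is a minimal normal subgroup of $G$ and elementary abelian if $N$ is elementary abelian.) *)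

From mathcomp Require Import all_boot all_fingroup all_solvable.
Set Implicit Arguments. Unset Strict Implicit. Unset Printing Implicit Defensive.
Local Open Scope group_scope.

Section Valency.
Variable gT : finGroupType.

Definition involution (x : gT) : bool := #[x] == 2%N.

Definition cayley_set (G : {group gT}) (S : {set gT}) : Prop :=
  [/\ S \subset G, 1 \notin S, {in S, forall x, x^-1 \in S} & <<S>> = G].

Definition n_inv (S : {set gT}) : nat := #|[set x in S | involution x]|.
Definition n_noninv (S : {set gT}) : nat := #|[set x in S | ~~ involution x]|.

Definition valent_set (a b : nat) (G : {group gT}) (S : {set gT}) : Prop :=
  cayley_set G S /\ n_inv S = a /\ n_noninv S = b.

(* (a',b') <= (a,b) iff b' <= b and a' <= a + (b-b')/2 (rational division,
   equivalently 2a' <= 2a + (b - b')). *)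
Definition valprec (a' b' a b : nat) : Prop :=
  (b' <= b)%N /\ (2 * a' <= 2 * a + (b - b'))%N.

Definition subvalent_set (a b : nat) (G : {group gT}) (S : {set gT}) : Prop :=
  cayley_set G S /\ valprec (n_inv S) (n_noninv S) a b.

Definition valent_group (a b : nat) (G : {group gT}) : Prop :=
  exists S : {set gT}, valent_set a b G S.

Definition subvalent_group (a b : nat) (G : {group gT}) : Prop :=
  exists S : {set gT}, subvalent_set a b G S.

Definition trivial_solrad (G : {group gT}) : Prop :=
  forall N : {group gT}, N <| G -> solvable N -> N :=: 1.

End Valency.

From mathcomp Require Import all_boot all_fingroup all_solvable.
From mathcomp Require Import zify.
Set Implicit Arguments. Unset Strict Implicit. Unset Printing Implicit Defensive.
Local Open Scope group_scope.

(* If G has a nontrivial soluble normal subgroup, a minimal normal subgroup N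
   inside it is elementary abelian, and it remains to see that any
   homomorphic image of an (a,b)-valent group is sub-(a,b)-valent. Map a
   Cayley set S along f and discard 1. Every non-involution of the image
   lifts to a non-involution of S. An involution of the image that is not
   the image of an involution of S is the image of a non-involution x with
   x <> x^-1, and x^-1 has the same image, so it consumes two
   non-involutions of S. Hence b' + 2c <= b and a' <= a + c, where c counts
   these new involutions. *)

Lemma leq_mul_card_fibers (T U : finType) (f : T -> U) (P : {set T})
    (Y : {set U}) (w : nat) :
  {in P, forall x, f x \in Y} ->
  {in Y, forall y, w <= #|P :&: f @^-1: [set y]|} ->
  #|Y| * w <= #|P|.
Proof.
move=> fPY fibY.
rewrite -sum_nat_const -sum1_card (partition_big f (mem Y)) //=.
apply: leq_sum => y Yy; rewrite (eq_bigl (mem (P :&: f @^-1: [set y]))).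
  by rewrite sum1_card fibY.
by move=> x; rewrite !inE.
Qed.

Lemma leq_card_fibers12 (T U : finType) (f : T -> U) (B : {set T})
    (Y1 Y2 : {set U}) :
  [disjoint Y1 & Y2] ->
  {in Y1, forall y, exists2 x, x \in B & f x = y} ->
  {in Y2, forall y, exists x1 x2,
    [/\ x1 \in B, x2 \in B, x1 != x2, f x1 = y & f x2 = y]} ->
  #|Y1| + 2 * #|Y2| <= #|B|.
Proof.
move=> /disjoint_setI0 Y12 lift1 lift2.
set P1 := B :&: f @^-1: Y1; set P2 := B :&: f @^-1: Y2.
have card1 : #|Y1| * 1 <= #|P1|.
  apply: (leq_mul_card_fibers (f := f)) => [x /setIP[_]|y Y1y].
    by rewrite inE.
  have [x Bx fx] := lift1 y Y1y; rewrite card_gt0; apply/set0Pn; exists x.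
  by rewrite !inE Bx fx Y1y eqxx.
have card2 : #|Y2| * 2 <= #|P2|.
  apply: (leq_mul_card_fibers (f := f)) => [x /setIP[_]|y Y2y].
    by rewrite inE.
  have [x1 [x2 [Bx1 Bx2 neq_x12 fx1 fx2]]] := lift2 y Y2y.
  have sub_fiber : [set x1; x2] \subset P2 :&: f @^-1: [set y].
    by apply/subsetP => z /set2P[]->; rewrite !inE ?Bx1 ?Bx2 ?fx1 ?fx2 Y2y eqxx.
  by apply: leq_trans (subset_leq_card sub_fiber); rewrite cards2 neq_x12.
have P12 : P1 :&: P2 = set0.
  by rewrite setIACA setIid -preimsetI Y12 preimset0 setI0.
have sPB : P1 :|: P2 \subset B by rewrite subUset !subsetIl.
have := subset_leq_card sPB; rewrite cardsU P12 cards0.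
lia.
Qed.

Section Involutions.
Variable gT : finGroupType.
Implicit Types (x : gT) (S : {set gT}).

Definition involutions S := [set x in S | involution x].
Definition noninvolutions S := [set x in S | ~~ involution x].

Lemma involutionE x : involution x = (x != 1) && (x ^+ 2 == 1).
Proof.
rewrite /involution -order_dvdn -order_eq1.
by have := order_gt0 x; case: #[x] => [|[|[|k]]].
Qed.

Lemma involutionVid x : involution x -> x^-1 = x.
Proof.
by rewrite involutionE => /andP[_ /eqP x2]; apply/eqP; rewrite eq_invg_mul -x2.
Qed.

Lemma noninvolutionsV S :
  {in S, forall x, x^-1 \in S} ->
  {in noninvolutions S, forall x, x^-1 \in noninvolutions S}.
Proof.
by move=> SV x; rewrite !inE /involution orderV => /andP[/SV -> ->].
Qed.

End Involutions.

Section MorphicImage.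
Variables (gT rT : finGroupType) (D : {group gT}) (f : {morphism D >-> rT}).

Lemma morph_involution x :
  x \in D -> involution x -> f x != 1 -> involution (f x).
Proof.
move=> Dx; rewrite !involutionE => /andP[_ /eqP x2] ->.
by rewrite -morphX // x2 morph1 eqxx.
Qed.

Variable S : {set gT}.
Hypotheses (sSD : S \subset D) (S1 : 1 \notin S)
  (SV : {in S, forall x, x^-1 \in S}).

Local Notation S' := (f @: S)^#.

Lemma noninvolution_lift y :
  y \in noninvolutions S' -> exists2 x, x \in noninvolutions S & f x = y.
Proof.
rewrite !inE => /andP[/andP[nty /imsetP[x Sx defy]] noninv_fx]; subst y.
exists x => //; rewrite inE Sx; apply: contra noninv_fx => inv_x.
exact: morph_involution (subsetP sSD x Sx) inv_x nty.
Qed.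

Lemma new_involution_lift y :
  y \in involutions S' :\: f @: involutions S ->
  exists x, [/\ x \in noninvolutions S, x^-1 \in noninvolutions S,
                x != x^-1, f x = y & f x^-1 = y].
Proof.
rewrite !inE => /andP[notfI /andP[/andP[_ /imsetP[x Sx defy]] inv_y]].
have noninv_x : x \in noninvolutions S.
  rewrite inE Sx; apply: contra notfI => inv_x.
  by apply/imsetP; exists x; rewrite ?inE ?Sx.
exists x; split=> //; first exact: noninvolutionsV.
- apply: contraTneq noninv_x => xV.
  have x2 : x ^+ 2 = 1 by rewrite expgS expg1 {2}xV mulgV.
  rewrite inE Sx involutionE x2 eqxx andbT /=.
  by rewrite negbK; apply: contraNneq S1 => <-.
- by rewrite morphV ?(subsetP sSD) // -defy involutionVid.
Qed.

Lemma card_noninvolutions_morph :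
  #|noninvolutions S'| + 2 * #|involutions S' :\: f @: involutions S|
    <= #|noninvolutions S|.
Proof.
apply: (leq_card_fibers12 (f := f)) => [|y|y].
- rewrite -setI_eq0; apply/eqP/setP => y; rewrite !inE.
  by case: (involution y); rewrite !(andbF, andbT).
- exact: noninvolution_lift.
- by case/new_involution_lift=> x [? ? ? ? ?]; exists x, x^-1.
Qed.

Lemma valprec_morph :
  valprec (n_inv S') (n_noninv S') (n_inv S) (n_noninv S).
Proof.
change (valprec #|involutions S'| #|noninvolutions S'|
                #|involutions S| #|noninvolutions S|).
have := card_noninvolutions_morph.
have := cardsID (f @: involutions S) (involutions S').
have : #|involutions S' :&: f @: involutions S| <= #|involutions S|.
  exact: leq_trans (subset_leq_card (subsetIr _ _)) (leq_imset_card _ _).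
rewrite /valprec; lia.
Qed.

End MorphicImage.

Lemma cayley_set_morphim (gT rT : finGroupType) (D G : {group gT})
    (f : {morphism D >-> rT}) (S : {set gT}) :
  G \subset D -> cayley_set G S -> cayley_set (f @* G) (f @: S)^#.
Proof.
move=> sGD [sSG S1 SV genSG]; have sSD := subset_trans sSG sGD.
split.
- by apply: subset_trans (subsetDl _ _) _; rewrite -morphimEsub // morphimS.
- by rewrite !inE eqxx.
- move=> y /setD1P[nty /imsetP[x Sx defy]]; subst y.
  rewrite !inE invg_eq1 nty /=.
  by apply/imsetP; exists x^-1; rewrite ?SV // morphV // (subsetP sSD).
- by rewrite genD1id -morphimEsub // -morphim_gen // genSG.
Qed.

Lemma subvalent_morphim (gT rT : finGroupType) (D G : {group gT})
    (f : {morphism D >-> rT}) (a b : nat) :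
  G \subset D -> valent_group a b G -> subvalent_group a b (f @* G)%G.
Proof.
move=> sGD [S [cayS [<- <-]]]; exists (f @: S)^#.
split; first exact: cayley_set_morphim.
case: cayS => sSG S1 SV _; exact: valprec_morph (subset_trans sSG sGD) S1 SV.
Qed.

Lemma trivial_solradVnormal (gT : finGroupType) (G : {group gT}) :
  trivial_solrad G \/
  exists N : {group gT}, [/\ N <| G, solvable N & N :!=: 1].
Proof.
case: (boolP [exists N : {group gT}, [&& N <| G, solvable N & N :!=: 1]]).
  by case/existsP=> N /and3P[nsNG solN ntN]; right; exists N.
move/existsPn=> noN; left=> N nsNG solN; apply/eqP.
by have := noN N; rewrite nsNG solN negbK.
Qed.

Lemma minnormal_abelem_exists (gT : finGroupType) (G N : {group gT}) :
  N <| G -> solvable N -> N :!=: 1 ->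
  exists2 M : {group gT}, minnormal M G & exists p, prime p /\ p.-abelem M.
Proof.
move=> /andP[_ nNG] solN ntN; have [M minM sMN] := minnormal_exists ntN nNG.
have [_ _ /is_abelemP[p p_pr abelM]] := minnormal_solvable minM sMN solN.
by exists M => //; exists p.
Qed.

Theorem lemma3p2 (gT : finGroupType) (G : {group gT}) (a b : nat) :
  valent_group a b G ->
  trivial_solrad G \/
  exists N : {group gT},
    [/\ minnormal N G, (exists p : nat, prime p /\ p.-abelem N)
      & subvalent_group a b (G / N)%G].
Proof.
move=> valG.
have [|[N [nsNG solN ntN]]] := trivial_solradVnormal G; [by left | right].
have [M minM abelM] := minnormal_abelem_exists nsNG solN ntN.
have nMG : G \subset 'N(M) by case/mingroupp/andP: minM.
by exists M; split=> //; apply: (subvalent_morphim (coset_morphism M) nMG valG).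
Qed.
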